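(* Under the rank assumptions stated in the context, let $S_{jkl}:=\{y+s v_j+t v_k+r v_l: y\in \mathrm{relint}(F_{jkl}), s> 0, t> 0,r>0\}$ for $1\leq j< k<l\leq d$ such that $F_{jkl}$ is a facet of $F_{jk}$. Then $S_{jkl}\cap S_{j'k'l'}=\emptyset$ for any $\{ j,k,l \}\neq \{ j',k' ,l'\}$.
   Context: Let $d\geq 3$, let $v_1,\dots,v_d\in\mathbb{R}^d$ be distinct unit vectors and $b_1,\dots,b_d$ real numbers, and let $A=\{x\in \mathbb{R}^d:\ x\cdot v_j\leq b_j\ \text{for}\ j=1,\dots, d\}$ be a (possibly unbounded) convex polytope. For each $j$, $F_j$ denotes the (possible) facet of $A$ corresponding to $v_j$ (the part of $A$ on the hyperplane $\{x: x\cdot v_j=b_j\}$); $F_{jk}=F_{kj}$ denotes the facet of $F_j$ created by intersecting with $F_k$, $k\neq j$; and $F_{jkl}$ (invariant under permutation of its indices) denotes the facet of the $(d-2)$-dimensional polytope $F_{jk}$ created by intersecting with $F_l$, $l\neq j,k$; $\mathrm{relint}$ denotes relative interior. The following rank assumptions are imposed: for any $1\leq j<k\leq d$, if $\operatorname{rank} \begin{bmatrix} v_j & v_k \end{bmatrix}<2$, then $\operatorname{rank} \begin{bmatrix} v_j & v_k\end{bmatrix}<\operatorname{rank} \begin{bmatrix} v_j & v_k\\ b_j&b_k \end{bmatrix}$; for any $1\leq j<k<l\leq d$, if $\operatorname{rank} \begin{bmatrix} v_j & v_k & v_l\end{bmatrix}<3$, then $\operatorname{rank} \begin{bmatrix}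 v_j & v_k & v_l\end{bmatrix}<\operatorname{rank} \begin{bmatrix} v_j & v_k & v_l\\ b_j&b_k&b_l \end{bmatrix}$; for any $1\leq j<k<l<s\leq d$, if $\operatorname{rank} \begin{bmatrix} v_j & v_k & v_l& v_s\end{bmatrix}<4$, then $\operatorname{rank} \begin{bmatrix} v_j & v_k & v_l& v_s\end{bmatrix}<\operatorname{rank} \begin{bmatrix} v_j & v_k & v_l& v_s\\ b_j&b_k&b_l&b_s \end{bmatrix}$. *)

From HB Require Import structures.
From mathcomp Require Import all_boot all_order all_algebra.
From mathcomp Require Import reals.
Set Implicit Arguments. Unset Strict Implicit. Unset Printing Implicit Defensive.
Import Order.TTheory GRing.Theory Num.Theory.
Local Open Scope ring_scope.

Section Defs.
Variables (R : realType) (d : nat).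
Notation vec := 'rV[R]_d.

Definition dotv (x y : vec) : R := \sum_(i < d) x 0 i * y 0 i.

Definition polyA (v : 'I_d -> vec) (b : 'I_d -> R) (x : vec) : Prop :=
  forall j, dotv x (v j) <= b j.

Definition face1 v b (j : 'I_d) (x : vec) : Prop :=
  polyA v b x /\ dotv x (v j) = b j.
Definition face2 v b (j k : 'I_d) (x : vec) : Prop :=
  face1 v b j x /\ face1 v b k x.
Definition face3 v b (j k l : 'I_d) (x : vec) : Prop :=
  face2 v b j k x /\ face1 v b l x.

Definition aff (S : vec -> Prop) (x : vec) : Prop :=
  exists n (p : 'I_n -> vec) (c : 'I_n -> R),
    (forall i, S (p i)) /\ \sum_(i < n) c i = 1 /\ x = \sum_(i < n) c i *: p i.

Definition diffmx (S : vec -> Prop) m (M : 'M[R]_(m, d)) : Prop :=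
  forall i, exists x y, S x /\ S y /\ row i M = x - y.

(* S is nonempty and its affine hull has dimension n *)
Definition affdim (S : vec -> Prop) (n : nat) : Prop :=
  (exists x, S x) /\
  (exists M : 'M[R]_(n, d), diffmx S M /\ \rank M = n) /\
  (forall m (M : 'M[R]_(m, d)), diffmx S M -> (\rank M <= n)%N).

Definition relint (S : vec -> Prop) (x : vec) : Prop :=
  S x /\ exists e : R, 0 < e /\
    forall y, aff S y -> (forall i, `|y 0 i - x 0 i| < e) -> S y.

(* matrices [v_{s 0} ... v_{s (n-1)}] (stored as rows; rank is transpose-invariant)
   and the same with the row of b's appended *)
Definition Vmat (v : 'I_d -> vec) n (s : 'I_n -> 'I_d) : 'M[R]_(n, d) :=
  \matrix_(i < n, c < d) v (s i) 0 c.
Definition Vbmat (v : 'I_d -> vec) (b : 'I_d -> R) n (s : 'I_n -> 'I_d)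
  : 'M[R]_(n, d + 1) :=
  row_mx (Vmat v s) (\col_(i < n) b (s i)).

Definition rank_assumption (v : 'I_d -> vec) (b : 'I_d -> R) (n : nat) : Prop :=
  forall s : 'I_n -> 'I_d, (forall p q : 'I_n, (p < q)%N -> (s p < s q)%N) ->
    (\rank (Vmat v s) < n)%N -> (\rank (Vmat v s) < \rank (Vbmat v b s))%N.

Definition Sset v b (j k l : 'I_d) (z : vec) : Prop :=
  exists y s t r, relint (face3 v b j k l) y /\ 0 < s /\ 0 < t /\ 0 < r /\
    z = y + s *: v j + t *: v k + r *: v l.

Definition facet3 v b (j k l : 'I_d) : Prop :=
  affdim (face2 v b j k) (d - 2) /\ affdim (face3 v b j k l) (d - 3).
End Defs.

(* If z = y + s v_j + t v_k + r v_l with y in F_jkl and s, t, r > 0, then z - y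
   lies in the normal cone of A at y, i.e. y is the nearest point of A to z; so
   two representations of z have the same base point y.  A point y of
   relint F_jkl lies on no further facet hyperplane {x . v_i = b_i}: otherwise
   all of F_jkl would lie on it, hence on four hyperplanes whose normals are
   independent by the rank assumption for four indices, and dim F_jkl <= d - 4.
   Thus {j, k, l} is the set of constraints active at y. *)

From Pilot Require Import Defs.
From HB Require Import structures.
From mathcomp Require Import all_boot all_order all_algebra.
From mathcomp Require Import reals.
From mathcomp Require Import ring lra zify.
Set Implicit Arguments. Unset Strict Implicit. Unset Printing Implicit Defensive.
Import Order.TTheory GRing.Theory Num.Theory.
Local Open Scope ring_scope.

Lemma enum_val_increasing n (I : {set 'I_n}) (p q : 'I_#|I|) :
  (p < q)%N -> (enum_val p < enum_val q)%N.
Proof.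
have ltn_ord_trans : transitive (fun a b : 'I_n => (a < b)%N).
  by move=> ? ? ?; exact: ltn_trans.
have sorted_I : sorted (fun a b : 'I_n => (a < b)%N) (enum I).
  rewrite /enum_mem -enumT; apply: sorted_filter => //.
  by have := iota_ltn_sorted 0 n; rewrite -val_enum_ord sorted_map.
set x0 := enum_val p.
rewrite /x0 (enum_val_nth x0 p) (enum_val_nth x0 q).
by apply: (sorted_ltn_nth ltn_ord_trans) => //; rewrite inE -cardE.
Qed.

Lemma card_set4 n (i j k l : 'I_n) : (j < k)%N -> (k < l)%N ->
  i \notin [set j; k; l] -> #|i |: [set j; k; l]| = 4%N.
Proof.
move=> jk kl /negPf ni; rewrite cardsU1 ni setUC cardsU1 cards2 !inE.
rewrite -!(inj_eq val_inj) /=; lia.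
Qed.

Section DotProduct.
Variables (R : realType) (d : nat).
Implicit Types x y z w : 'rV[R]_d.

Lemma dotvC x y : dotv x y = dotv y x.
Proof. by apply: eq_bigr => i _; rewrite mulrC. Qed.

Lemma dotvDl x y w : dotv (x + y) w = dotv x w + dotv y w.
Proof. by rewrite /dotv -big_split; apply: eq_bigr => i _; rewrite !mxE mulrDl. Qed.

Lemma dotvZl (a : R) x w : dotv (a *: x) w = a * dotv x w.
Proof. by rewrite /dotv mulr_sumr; apply: eq_bigr => i _; rewrite !mxE mulrA. Qed.

Lemma dotvBl x y w : dotv (x - y) w = dotv x w - dotv y w.
Proof. by rewrite dotvDl -scaleN1r dotvZl mulN1r. Qed.

Lemma dotvBr x y w : dotv w (x - y) = dotv w x - dotv w y.
Proof. by rewrite !(dotvC w) dotvBl. Qed.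

Lemma dotv_le0_eq0 w : dotv w w <= 0 -> w = 0.
Proof.
move=> w2_le0; have sqr_ge0 (a : R) : 0 <= a * a by rewrite -expr2 sqr_ge0.
have w2_eq0 : dotv w w = 0.
  by apply/eqP; rewrite eq_le w2_le0 sumr_ge0.
apply/matrixP => i c; rewrite ord1 mxE.
have /eqP := psumr_eq0P (fun c _ => sqr_ge0 (w 0 c)) w2_eq0 (i := c) isT.
by rewrite mulf_eq0 orbb => /eqP.
Qed.

Lemma variational_point_unique z y y' :
  dotv (z - y) (y' - y) <= 0 -> dotv (z - y') (y - y') <= 0 -> y = y'.
Proof.
move=> le_y le_y'; apply/esym/subr0_eq/dotv_le0_eq0.
move: le_y le_y'; rewrite !(dotvBl, dotvBr) (dotvC y y') (dotvC z y) (dotvC z y').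
lra.
Qed.

Lemma aff_extrapolate (F : 'rV[R]_d -> Prop) x y (e : R) :
  F x -> F y -> aff F ((1 + e) *: y - e *: x).
Proof.
move=> Fx Fy; exists 2%N, (fun m : 'I_2 => if m == ord0 then y else x),
  (fun m : 'I_2 => if m == ord0 then 1 + e else - e).
split; first by move=> m; case: ifP.
by rewrite !big_ord_recl !big_ord0 /= !addr0 addrK scaleNr.
Qed.

Lemma small_multiple w (e : R) : 0 < e ->
  exists2 eps : R, 0 < eps & forall c, `|eps * w 0 c| < e.
Proof.
move=> e_gt0; set K := 1 + \sum_(c < d) `|w 0 c|.
have K_gt0 : 0 < K by rewrite ltr_pwDl // sumr_ge0.
have w_lt_K c : `|w 0 c| < K.
  rewrite /K (bigD1 c) //=.
  have : 0 <= \sum_(i < d | i != c) `|w 0 i| by rewrite sumr_ge0.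
  lra.
exists (e / K); first exact: divr_gt0.
move=> c; rewrite normrM gtr0_norm ?divr_gt0 //.
by rewrite mulrAC ltr_pdivrMr // ltr_pM2l.
Qed.

Lemma relint_tight (F : 'rV[R]_d -> Prop) (a : 'rV[R]_d) (c : R) y :
  relint F y -> (forall x, F x -> dotv x a <= c) -> dotv y a = c ->
  forall x, F x -> dotv x a = c.
Proof.
move=> [Fy [e [e_gt0 near_y]]] F_le yc x Fx.
have [eps eps_gt0 small] := small_multiple (y - x) e_gt0.
have Fy2 : F ((1 + eps) *: y - eps *: x).
  apply: near_y => [|i]; first exact: aff_extrapolate.
  suff -> : ((1 + eps) *: y - eps *: x) 0 i - y 0 i = eps * (y - x) 0 i by [].
  by rewrite !mxE; ring.
have := F_le _ Fy2; rewrite dotvBl !dotvZl yc => le_c.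
apply/eqP; rewrite eq_le F_le //=.
have : eps * (c - dotv x a) <= 0 by move: le_c; rewrite mulrBr mulrDl mul1r; lra.
by rewrite pmulr_rle0 // subr_le0.
Qed.

End DotProduct.

Section Polytope.
Variables (R : realType) (d : nat) (v : 'I_d -> 'rV[R]_d) (b : 'I_d -> R).

Lemma face3_normal_cone j k l y z s t r x :
  face3 v b j k l y -> 0 <= s -> 0 <= t -> 0 <= r ->
  z = y + s *: v j + t *: v k + r *: v l -> polyA v b x ->
  dotv (z - y) (x - y) <= 0.
Proof.
move=> [[[_ yj] [_ yk]] [_ yl]] s_ge0 t_ge0 r_ge0 -> Ax.
have normal_le0 i a : 0 <= a -> dotv y (v i) = b i -> a * dotv (v i) (x - y) <= 0.
  move=> a_ge0 yi; rewrite mulr_ge0_le0 // dotvBr !(dotvC (v i)) yi subr_le0.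
  exact: Ax.
have := normal_le0 _ _ s_ge0 yj; have := normal_le0 _ _ t_ge0 yk.
have := normal_le0 _ _ r_ge0 yl.
rewrite dotvBl !(dotvDl, dotvZl); lra.
Qed.

Lemma Sset_common_base j k l j' k' l' z :
  Sset v b j k l z -> Sset v b j' k' l' z ->
  exists y, relint (face3 v b j k l) y /\ relint (face3 v b j' k' l') y.
Proof.
move=> [y [s [t [r [ry [s_gt0 [t_gt0 [r_gt0 ez]]]]]]]].
move=> [y' [s' [t' [r' [ry' [s'_gt0 [t'_gt0 [r'_gt0 ez']]]]]]]].
suff y_eq : y = y' by exists y; rewrite {2}y_eq.
apply: (@variational_point_unique _ _ z).
- exact: face3_normal_cone ry.1 (ltW s_gt0) (ltW t_gt0) (ltW r_gt0) ez ry'.1.1.1.1.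
- exact: face3_normal_cone ry'.1 (ltW s'_gt0) (ltW t'_gt0) (ltW r'_gt0) ez' ry.1.1.1.1.
Qed.

Lemma rank_Vbmat_le n (s : 'I_n -> 'I_d) y :
  (forall m, dotv y (v (s m)) = b (s m)) ->
  (\rank (Vbmat v b s) <= \rank (Vmat v s))%N.
Proof.
move=> ys; have -> : Vbmat v b s = Vmat v s *m row_mx 1%:M y^T.
  rewrite mul_mx_row mulmx1; congr row_mx.
  apply/matrixP => m c; rewrite !mxE ord1 -ys dotvC.
  by apply: eq_bigr => a _; rewrite !mxE.
exact: mxrankM_maxl.
Qed.

Lemma rank_Vmat_full n (s : 'I_n -> 'I_d) y :
  (forall p q : 'I_n, (p < q)%N -> (s p < s q)%N) -> rank_assumption v b n ->
  (forall m, dotv y (v (s m)) = b (s m)) -> \rank (Vmat v s) = n.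
Proof.
move=> s_incr ra ys; apply/eqP; rewrite eqn_leq rank_leq_row leqNgt /=.
by apply/negP => /(ra s s_incr); rewrite ltnNge (rank_Vbmat_le ys).
Qed.

Lemma diffmx_rank_Vmat (F : 'rV[R]_d -> Prop) n (s : 'I_n -> 'I_d) m
    (M : 'M[R]_(m, d)) :
  (forall x, F x -> forall i, dotv x (v (s i)) = b (s i)) -> Defs.diffmx F M ->
  (\rank M + \rank (Vmat v s) <= d)%N.
Proof.
move=> Fs dM; rewrite -[\rank (Vmat v s)]mxrank_tr; apply: mulmx0_rank_max.
apply/matrixP => a c; rewrite !mxE.
have [x [y [Fx [Fy rowM]]]] := dM a.
transitivity (dotv (row a M) (v (s c))); first by apply: eq_bigr => i _; rewrite !mxE.
by rewrite rowM dotvBl !Fs // subrr.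
Qed.

Lemma face_rank_le (F : 'rV[R]_d -> Prop) (I : {set 'I_d}) y m (M : 'M[R]_(m, d)) :
  rank_assumption v b #|I| -> F y ->
  (forall x, F x -> forall i, i \in I -> dotv x (v i) = b i) -> Defs.diffmx F M ->
  (\rank M + #|I| <= d)%N.
Proof.
move=> ra Fy FI dM.
have FI' x : F x -> forall p : 'I_#|I|, dotv x (v (enum_val p)) = b (enum_val p).
  by move=> Fx p; apply: FI Fx _ (enum_valP p).
rewrite -(rank_Vmat_full (@enum_val_increasing _ I) ra (FI' _ Fy)).
exact: diffmx_rank_Vmat FI' dM.
Qed.

Lemma relint_face3_active (j k l i : 'I_d) y : (j < k)%N -> (k < l)%N ->
  affdim (face3 v b j k l) (d - 3) -> rank_assumption v b 4 ->
  relint (face3 v b j k l) y -> dotv y (v i) = b i -> i \in [set j; k; l].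
Proof.
move=> jk kl [_ [[M [dM rkM]] _]] ra ry yi; apply/negPn/negP => i_out.
have tight_i := relint_tight ry (fun x Fx => Fx.1.1.1 i) yi.
have FI x : face3 v b j k l x -> forall a, a \in i |: [set j; k; l] ->
    dotv x (v a) = b a.
  move=> Fx a; rewrite !inE -!orbA => /or4P[] /eqP ->.
  - exact: tight_i.
  - exact: Fx.1.1.2.
  - exact: Fx.1.2.2.
  - exact: Fx.2.2.
have card4 := card_set4 jk kl i_out.
have ra' : rank_assumption v b #|i |: [set j; k; l]| by rewrite card4.
by have := face_rank_le ra' ry.1 FI dM; rewrite card4 rkM; lia.
Qed.

Lemma relint_face3_subset (j k l j' k' l' : 'I_d) y : (j < k)%N -> (k < l)%N ->
  affdim (face3 v b j k l) (d - 3) -> rank_assumption v b 4 ->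
  relint (face3 v b j k l) y -> face3 v b j' k' l' y ->
  [set j'; k'; l'] \subset [set j; k; l].
Proof.
move=> jk kl dimF ra ry [[[_ yj'] [_ yk']] [_ yl']].
apply/subsetP => a a_in; apply: relint_face3_active jk kl dimF ra ry _.
by move: a_in; rewrite !inE -!orbA => /or3P[] /eqP ->.
Qed.

End Polytope.

Theorem lemma6p4 (R : realType) (d : nat) (v : 'I_d -> 'rV[R]_d) (b : 'I_d -> R) :
  (3 <= d)%N ->
  (forall j, dotv (v j) (v j) = 1) ->
  injective v ->
  rank_assumption v b 2 -> rank_assumption v b 3 -> rank_assumption v b 4 ->
  forall j k l j' k' l' : 'I_d,
    (j < k)%N -> (k < l)%N -> (j' < k')%N -> (k' < l')%N ->
    facet3 v b j k l -> facet3 v b j' k' l' ->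
    [set j; k; l] != [set j'; k'; l'] ->
    forall z, ~ (Sset v b j k l z /\ Sset v b j' k' l' z).
Proof.
move=> _ _ _ _ _ ra j k l j' k' l' jk kl jk' kl' [_ dimF] [_ dimF'] neq z [Sz Sz'].
have [y [ry ry']] := Sset_common_base Sz Sz'.
move/negP: neq; apply; rewrite eqEsubset.
by rewrite (relint_face3_subset jk kl dimF ra ry ry'.1)
  (relint_face3_subset jk' kl' dimF' ra ry' ry.1).
Qed.
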